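(* Let $X$ be a complex manifold, $\omega$ a Hermitian metric and $\gamma$ a smooth real $(1,1)$-form on $X$. For any bidegree $(p,q)$ and any $C^\infty$ family $(\alpha_t)_{t\in(-\varepsilon,\varepsilon)}$ of smooth $(p,q)$-forms, with $\varepsilon>0$ so small that $\omega+t\gamma>0$ for all $t\in(-\varepsilon,\varepsilon)$, $$\frac{d}{dt}\Big|_{t=0}\big(\Lambda_{\omega+t\gamma}\alpha_t\big)=\Lambda_\omega\Big(\frac{d\alpha_t}{dt}\Big|_{t=0}\Big)-(\gamma\wedge\cdot)^\star_\omega\,\alpha_0.$$
   Context: Hermitian metrics are smooth positive definite real $(1,1)$-forms. For a Hermitian metric $\rho$, $\Lambda_\rho$ is the adjoint of $\rho\wedge\cdot$ with respect to the pointwise inner product induced by $\rho$; $(\gamma\wedge\cdot)^\star_\omega$ is the adjoint of multiplication by $\gamma$ with respect to the pointwise inner product induced by $\omega$. *)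

(* Pointwise (linear-algebraic) model of
   complex-valued differential forms at a point of an n-dimensional complex
   manifold. *)
From mathcomp Require Import all_boot all_algebra.
From mathcomp Require Import complex.
From mathcomp Require Import all_classical all_reals all_analysis.
Set Implicit Arguments. Unset Strict Implicit. Unset Printing Implicit Defensive.
Import GRing.Theory Num.Theory.
Local Open Scope ring_scope.

Section Forms.
Variables (R : realType) (n : nat).

(* A complex-valued form at a point of C^n (all bidegrees at once):
   [a I J] is the coefficient of dz_I /\ dzbar_J, where
   dz_I = dz_{i1} /\ ... /\ dz_{ip} for I = {i1 < ... < ip}. *)
Definition cform := {set 'I_n} -> {set 'I_n} -> R[i].

Definition is_pq_form (p q : nat) (a : cform) : Prop :=
  forall I J, a I J != 0 -> #|I| = p /\ #|J| = q.

(* sign of the shuffle bringing the increasing tuple A followed by the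
   increasing tuple B into increasing order (A, B disjoint) *)
Definition shsign (A B : {set 'I_n}) : R[i] :=
  (-1) ^+ #|[set xy : 'I_n * 'I_n | [&& xy.1 \in A, xy.2 \in B & (val xy.2 < val xy.1)%N]]|.

Definition wedge (a b : cform) : cform := fun I J =>
  \sum_(I1 : {set 'I_n} | I1 \subset I) \sum_(J1 : {set 'I_n} | J1 \subset J)
    shsign I1 (I :\: I1) * shsign J1 (J :\: J1)
    * (-1) ^+ (#|J1| * #|I :\: I1|) * a I1 J1 * b (I :\: I1) (J :\: J1).

(* the (1,1)-cform  i * \sum_{j,k} h_{jk} dz_j /\ dzbar_k  *)
Definition form11 (h : 'M[R[i]]_n) : cform := fun I J =>
  \sum_(j : 'I_n) \sum_(k : 'I_n)
    (if (I == [set j]) && (J == [set k]) then 'i * h j k else 0).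

(* h is a Hermitian matrix: form11 h is then a real (1,1)-cform *)
Definition is_hermitian (h : 'M[R[i]]_n) : Prop :=
  forall j k, h k j = (h j k)^*.

(* h is positive definite: form11 h is then a Hermitian metric *)
Definition is_posdef (h : 'M[R[i]]_n) : Prop :=
  forall v : 'I_n -> R[i], (exists j, v j != 0) ->
    0 < \sum_(j : 'I_n) \sum_(k : 'I_n) h j k * v j * (v k)^*.

(* determinant of the minor of G with rows I and columns K (0 if sizes differ) *)
Definition subdet (G : 'M[R[i]]_n) (I K : {set 'I_n}) : R[i] :=
  match #|I| =P #|K| with
  | ReflectT e =>
      \det (\matrix_(a < #|I|, b < #|I|)
              G (enum_val a) (enum_val (cast_ord e b)))
  | ReflectF _ => 0
  end.

(* pointwise Hermitian inner product on forms induced by the metric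
   omega = i \sum h_{jk} dz_j /\ dzbar_k :
   <dz_j, dz_k> = (h^-1)_{kj},  <dzbar_j, dzbar_k> = (h^-1)_{jk},
   dz's orthogonal to dzbar's, extended to wedge products by determinants
   and sesquilinearly (linear in the first argument). *)
Definition basis_ip (h : 'M[R[i]]_n) (I J K L : {set 'I_n}) : R[i] :=
  subdet (\matrix_(j, k) (invmx h) k j) I K * subdet (invmx h) J L.

Definition ip (h : 'M[R[i]]_n) (a b : cform) : R[i] :=
  \sum_(I : {set 'I_n}) \sum_(J : {set 'I_n}) \sum_(K : {set 'I_n})
    \sum_(L : {set 'I_n}) a I J * (b K L)^* * basis_ip h I J K L.

End Forms.

Definition smooth_on (R : realType) (eps : R) (f : R -> R) : Prop :=
  forall (k : nat) (t : R), - eps < t < eps ->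
    derivable (iter k (fun g => derive1 g) f) t 1.

Definition dform0 (R : realType) (n : nat) (a : R -> cform R n) : cform R n :=
  fun I J => ((derive1 (fun t => complex.Re (a t I J)) 0)%:C
              + 'i * (derive1 (fun t => complex.Im (a t I J)) 0)%:C)%C.

From mathcomp Require Import all_boot all_algebra.
From mathcomp Require Import complex.
From mathcomp Require Import all_classical all_reals all_analysis.
From mathcomp Require Import zify ring.
Set Implicit Arguments. Unset Strict Implicit. Unset Printing Implicit Defensive.
Import GRing.Theory Num.Theory.
Local Open Scope ring_scope.

(* Write H = h^-1 and let
   c_ab v be the contraction of a form v with dz_a and dzbar_b.  Laplace
   expansion of the minors of H that define the inner product shows that the
   adjoint of dz_j /\ . is a contraction weighted by H, and likewise for
   dzbar_k /\ .; summing, the adjoint of (form11 X /\ .) for the metric h is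
   v |-> \sum_ab conj(i (H X H)_ab) c_ab v.  The inner product is
   nondegenerate, so adjoints are unique, and therefore
   Lambda_{h + t g} = \sum_ab conj(i (h + t g)^-1_ab) c_ab  and
   (g /\ .)^* = \sum_ab conj(i (H g H)_ab) c_ab.
   The formula is then the product rule together with
   d/dt (h + t g)^-1 = - H g H at t = 0. *)

Section DeleteNth.
Variable T : Type.

Definition del_nth (p : nat) (s : seq T) := take p s ++ drop p.+1 s.

Lemma nth_del_nth x0 p s i : nth x0 (del_nth p s) i = nth x0 s (bump p i).
Proof.
rewrite /del_nth nth_cat size_take /bump.
case: (ltnP p (size s)) => hp.
  case: (ltnP i p) => hi; first by rewrite nth_take // add0n.
  by rewrite nth_drop; congr nth; lia.
case: (ltnP i (size s)) => hi.
  by rewrite nth_take ?(leq_trans hi hp) // leqNgt (leq_trans hi hp).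
by rewrite !nth_default ?size_drop //; lia.
Qed.

Lemma del_nth0_cons x s : del_nth 0 (x :: s) = s.
Proof. by rewrite /del_nth /= drop0. Qed.

End DeleteNth.

Lemma rem_del_nth (T : eqType) (x : T) s : rem x s = del_nth (index x s) s.
Proof. exact: remE. Qed.

Section SubsetSigns.
Variables (R : realType) (n : nat).
Implicit Types (A I K : {set 'I_n}) (G : 'M[R[i]]_n).

Definition ord_lt : rel 'I_n := fun x y => (val x < val y)%N.

Lemma ord_lt_trans : transitive ord_lt. Proof. exact: ltn_trans. Qed.
Lemma ord_lt_irr : irreflexive ord_lt. Proof. exact: ltnn. Qed.

Lemma sorted_enum_set A : sorted ord_lt (enum A).
Proof.
rewrite /enum_mem -enumT; apply: (sorted_filter ord_lt_trans).
by have := iota_ltn_sorted 0 n; rewrite -val_enum_ord sorted_map.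
Qed.

Lemma rem_enum_setU1 j I : j \notin I -> rem j (enum (j |: I)) = enum I.
Proof.
move=> jI; apply: (irr_sorted_eq ord_lt_trans ord_lt_irr).
- exact: (subseq_sorted ord_lt_trans (rem_subseq _ _) (sorted_enum_set _)).
- exact: sorted_enum_set.
move=> x; rewrite mem_rem_uniq ?enum_uniq // !inE !mem_enum !inE.
by case: eqP => // ->; rewrite (negbTE jI).
Qed.

Lemma index_sorted j s : sorted ord_lt s -> j \in s ->
  index j s = count (ord_lt^~ j) s.
Proof.
elim: s => //= y s IH ys; rewrite inE.
have y_lt : all (ord_lt y) s := order_path_min ord_lt_trans ys.
case: (eqVneq y j) => [<- _ | ne /= js].
  rewrite ord_lt_irr add0n; apply/esym/eqP; rewrite -leqn0 leqNgt -has_count.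
  by apply/hasPn => x /(allP y_lt); rewrite /ord_lt -leqNgt => /ltnW.
by rewrite IH ?(path_sorted ys) // (allP y_lt j js).
Qed.

Lemma count_enum_set (P : pred 'I_n) A : count P (enum A) = #|[set x in A | P x]|.
Proof.
rewrite cardE /enum_mem size_filter count_filter; apply: eq_count => x.
by rewrite !inE andbC.
Qed.

Definition ins_sign (j : 'I_n) A : R[i] := (-1) ^+ #|[set x in A | ord_lt x j]|.

Lemma index_enum_setU1 j I : j \notin I ->
  index j (enum (j |: I)) = #|[set x in I | ord_lt x j]|.
Proof.
move=> jI; have jIj : j \in enum (j |: I) by rewrite mem_enum setU11.
rewrite index_sorted ?sorted_enum_set // (permP (perm_to_rem jIj)).
by rewrite rem_enum_setU1 //= ord_lt_irr add0n count_enum_set.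
Qed.

Lemma ins_sign_conj j A : (ins_sign j A)^* = ins_sign j A.
Proof. by rewrite rmorphXn rmorphN1. Qed.

Lemma ins_sign_neq0 j A : ins_sign j A != 0.
Proof. by rewrite /ins_sign signr_eq0. Qed.

Lemma shsign_set1 j A : shsign R [set j] A = ins_sign j A.
Proof.
rewrite /shsign /ins_sign.
have -> : [set xy : 'I_n * 'I_n | [&& xy.1 \in [set j], xy.2 \in A & (val xy.2 < val xy.1)%N]]
   = pair j @: [set x in A | ord_lt x j].
  apply/setP => -[x y]; rewrite !inE /=; apply/idP/imsetP.
  - by case/and3P => /eqP -> yA lt; exists y; rewrite ?inE ?yA.
  - by case=> z; rewrite !inE => /andP[zA lt] [-> ->]; rewrite eqxx zA.
by rewrite card_imset // => a b [].
Qed.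

Definition submx_seq (x0 : 'I_n) G (s1 s2 : seq 'I_n) m : 'M[R[i]]_m :=
  \matrix_(a < m, b < m) G (nth x0 s1 a) (nth x0 s2 b).

Lemma subdet_seqE x0 G I K m : #|I| = m -> #|K| = m ->
  subdet G I K = \det (submx_seq x0 G (enum I) (enum K) m).
Proof.
move=> <- eK; rewrite /subdet; case: eqP => [e|]; last by rewrite eK.
by congr (\det _); apply/matrixP => a b; rewrite !mxE !(enum_val_nth x0).
Qed.

Lemma subdet_card_neq G I K : #|I| != #|K| -> subdet G I K = 0.
Proof. by rewrite /subdet; case: eqP. Qed.

Lemma subdet_set0 G K : subdet G finset.set0 K = (K == finset.set0)%:R.
Proof.
case: (eqVneq K finset.set0) => [->|K0]; last first.
  by rewrite subdet_card_neq // cards0 eq_sym cards_eq0.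
rewrite /subdet; case: eqP => [e|]; last by rewrite cards0.
by move: (\matrix_(_, _) _); rewrite cards0 => M; rewrite det_mx00.
Qed.

Lemma expand_det_submx_seq x0 G s1 s2 m (p : 'I_m.+1) :
  \det (submx_seq x0 G s1 s2 m.+1) = \sum_(q < m.+1)
    G (nth x0 s1 p) (nth x0 s2 q) * (-1) ^+ (p + q)
      * \det (submx_seq x0 G (del_nth p s1) (del_nth q s2) m).
Proof.
rewrite (expand_det_row _ p); apply: eq_bigr => q _.
rewrite /cofactor !mxE mulrA; congr (_ * \det _).
by apply/matrixP => a b; rewrite !mxE !nth_del_nth.
Qed.

Lemma big_set_nth x0 K m (F : 'I_n -> R[i]) : #|K| = m ->
  \sum_(a in K) F a = \sum_(q < m) F (nth x0 (enum K) q).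
Proof. by move=> eK; rewrite -big_enum (big_nth x0) -cardE eK big_mkord. Qed.

Lemma laplace_subdet G j I K : #|K| = #|I|.+1 ->
  \sum_(a in K) ins_sign a (K :\ a) * G j a * subdet G I (K :\ a)
  = \det (submx_seq j G (j :: enum I) (enum K) #|I|.+1).
Proof.
move=> hK; rewrite (expand_det_submx_seq _ _ _ _ ord0) (big_set_nth j _ hK).
apply: eq_bigr => q _; set a := nth j (enum K) q.
have qK : (q < size (enum K))%N by rewrite -cardE hK.
have aK : a \in K by rewrite -mem_enum mem_nth.
have aKa : a \notin K :\ a by rewrite !inE eqxx.
have qa : index a (enum K) = q by rewrite index_uniq // enum_uniq.
have enum_Ka : enum (K :\ a) = del_nth q (enum K).
  by rewrite -(rem_enum_setU1 aKa) finset.setD1K // rem_del_nth qa.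
have sign_a : ins_sign a (K :\ a) = (-1) ^+ q.
  by rewrite /ins_sign -index_enum_setU1 // finset.setD1K // qa.
rewrite sign_a (subdet_seqE j _ (m := #|I|)) //; last first.
  by apply/eqP; rewrite -eqSS -hK (cardsD1 a K) aK.
by rewrite enum_Ka del_nth0_cons add0n [_ * G j a]mulrC.
Qed.

Lemma det_submx_seq_cons_mem G j I K : j \in I ->
  \det (submx_seq j G (j :: enum I) (enum K) #|I|.+1) = 0.
Proof.
move=> jI; have jsz : (index j (enum I) < #|I|)%N by rewrite cardE index_mem mem_enum.
apply: (determinant_alternate (i1 := ord0) (i2 := inord (index j (enum I)).+1)).
  by rewrite -val_eqE /= inordK.
by move=> b; rewrite !mxE inordK //= nth_index // mem_enum.
Qed.

Lemma det_submx_seq_cons_notin G j I K : j \notin I ->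
  \det (submx_seq j G (enum (j |: I)) (enum K) #|I|.+1)
  = ins_sign j I * \det (submx_seq j G (j :: enum I) (enum K) #|I|.+1).
Proof.
move=> jI; set p := index j (enum (j |: I)).
have cardU : #|j |: I| = #|I|.+1 by rewrite cardsU1 jI.
have pI : (p < #|I|.+1)%N by rewrite -cardU cardE index_mem mem_enum setU11.
rewrite (expand_det_submx_seq _ _ _ _ (inord p)) (expand_det_submx_seq _ _ _ _ ord0).
rewrite big_distrr; apply: eq_bigr => q _ /=.
rewrite inordK // nth_index ?mem_enum ?setU11 // -rem_del_nth rem_enum_setU1 //.
rewrite /ins_sign -index_enum_setU1 // -/p exprD add0n.
by rewrite del_nth0_cons; ring.
Qed.

Lemma subdet_laplace G j I K :
  \sum_(a in K) ins_sign a (K :\ a) * G j a * subdet G I (K :\ a)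
  = if j \in I then 0 else ins_sign j I * subdet G (j |: I) K.
Proof.
case: (eqVneq #|K| #|I|.+1) => hK; last first.
  rewrite big1 => [|a aK]; last first.
    rewrite subdet_card_neq ?mulr0 // eq_sym -eqSS.
    by move: hK; rewrite (cardsD1 a K) aK.
  by case: ifP => // jI; rewrite subdet_card_neq ?mulr0 // cardsU1 jI eq_sym.
rewrite laplace_subdet //; case: ifPn => jI; first exact: det_submx_seq_cons_mem.
rewrite (subdet_seqE j _ (m := #|I|.+1)) ?cardsU1 ?jI // det_submx_seq_cons_notin //.
by rewrite /ins_sign signrMK.
Qed.

End SubsetSigns.

Section Contraction.
Variables (R : realType) (n : nat).
Implicit Types (j a : 'I_n) (I K : {set 'I_n}) (G : 'M[R[i]]_n) (f g : {set 'I_n} -> R[i]).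

Lemma reindex_setU1 j f :
  \sum_(I : {set 'I_n} | j \in I) f I = \sum_(I : {set 'I_n} | j \notin I) f (j |: I).
Proof.
rewrite (reindex_onto (fun I => j |: I) (fun I => I :\ j)) /=.
  apply: eq_bigl => I; rewrite setU11 /=.
  case: (boolP (j \in I)) => jI; last by rewrite finset.setU1K // eqxx.
  by apply/negbTE/eqP => E; move: jI; rewrite -E !inE eqxx.
by move=> I jI; rewrite finset.setD1K.
Qed.

Lemma sum_mem_setD1 (F : 'I_n -> {set 'I_n} -> R[i]) :
  \sum_(K : {set 'I_n}) \sum_(a in K) F a (K :\ a)
  = \sum_(K : {set 'I_n}) \sum_(a | a \notin K) F a K.
Proof.
under eq_bigr => K _ do rewrite big_mkcond.
under [RHS]eq_bigr => K _ do rewrite big_mkcond.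
rewrite exchange_big [RHS]exchange_big; apply: eq_bigr => a _.
rewrite -!big_mkcond reindex_setU1; apply: eq_bigr => K aK.
by rewrite finset.setU1K.
Qed.

Definition ext_mul j f I : R[i] :=
  if j \in I then ins_sign R j (I :\ j) * f (I :\ j) else 0.

Definition contract G j g K : R[i] :=
  \sum_(a | a \notin K) (G j a)^* * ins_sign R a K * g (a |: K).

Definition subdet_pair G f g : R[i] :=
  \sum_(I : {set 'I_n}) \sum_(K : {set 'I_n}) f I * (g K)^* * subdet G I K.

Lemma sum_ext_mul_subdet G j f K :
  \sum_(I : {set 'I_n}) ext_mul j f I * subdet G I K =
  \sum_(I : {set 'I_n}) f I * \sum_(a in K) ins_sign R a (K :\ a) * G j a * subdet G I (K :\ a).
Proof.
rewrite (bigID (fun I => j \in I)) /= [X in _ + X]big1 ?addr0; last first.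
  by move=> I /negbTE jI; rewrite /ext_mul jI mul0r.
rewrite reindex_setU1; under eq_bigr => I _ do rewrite subdet_laplace.
rewrite [RHS](bigID (fun I => j \in I)) /= [X in _ = X + _]big1 ?add0r; last first.
  by move=> I ->; rewrite mulr0.
apply: eq_bigr => I /negbTE jI; rewrite /ext_mul setU11 finset.setU1K ?jI //.
by rewrite mulrCA mulrA.
Qed.

Lemma subdet_pair_ext_mul G j f g :
  subdet_pair G (ext_mul j f) g = subdet_pair G f (contract G j g).
Proof.
pose Psi a K := \sum_(I : {set 'I_n})
  f I * (G j a * ins_sign R a K * (g (a |: K))^*) * subdet G I K.
transitivity (\sum_(K : {set 'I_n}) \sum_(a in K) Psi a (K :\ a)).
  rewrite /subdet_pair exchange_big; apply: eq_bigr => K _.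
  under eq_bigr => I _ do rewrite mulrAC.
  rewrite -big_distrl sum_ext_mul_subdet big_distrl [RHS]exchange_big /=.
  apply: eq_bigr => I _; rewrite big_distrr big_distrl /=.
  by apply: eq_bigr => a aK; rewrite finset.setD1K //; ring.
rewrite sum_mem_setD1 /subdet_pair exchange_big; apply: eq_bigr => K _.
rewrite /Psi exchange_big; apply: eq_bigr => I _.
rewrite /contract rmorph_sum big_distrr big_distrl /=; apply: eq_bigr => a _.
by rewrite !rmorphM /= ins_sign_conj conjCK; ring.
Qed.

Lemma subdet_pair_scalel G c f g :
  subdet_pair G (fun I => c * f I) g = c * subdet_pair G f g.
Proof.
rewrite /subdet_pair big_distrr; apply: eq_bigr => I _.
by rewrite big_distrr; apply: eq_bigr => K _; rewrite /= !mulrA.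
Qed.

Lemma subdet_pair_scaler G c f g :
  subdet_pair G f (fun K => c * g K) = c^* * subdet_pair G f g.
Proof.
rewrite /subdet_pair big_distrr; apply: eq_bigr => I _.
by rewrite big_distrr; apply: eq_bigr => K _; rewrite /= rmorphM; ring.
Qed.

End Contraction.

Lemma sum_if_eq (R : nmodType) (T : finType) (P : pred T) (b : T) (F : T -> R) :
  \sum_(x | P x) (if x == b then F x else 0) = if P b then F b else 0.
Proof.
rewrite -big_mkcondr; case: (boolP (P b)) => Pb.
  by rewrite (big_pred1 b) // => x /=; case: eqP => [->|_]; rewrite ?Pb ?andbF.
by rewrite big_pred0 // => x; case: eqP => [->|_]; rewrite ?andbF // andbT (negbTE Pb).
Qed.

Lemma sum_delta (R : pzSemiRingType) (T : finType) (b : T) (F : T -> R) :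
  \sum_(x : T) (x == b)%:R * F x = F b.
Proof.
rewrite (bigD1 b) //= eqxx mul1r big1 ?addr0 // => x /negbTE ->.
by rewrite mul0r.
Qed.

Section InnerProduct.
Variables (R : realType) (n : nat).
Implicit Types (j k a b : 'I_n) (I J K L : {set 'I_n}) (h X G : 'M[R[i]]_n).
Implicit Types (g : {set 'I_n} -> R[i]) (u v w : cform R n).

Definition invmxT h : 'M[R[i]]_n := \matrix_(j, k) invmx h k j.

Lemma invmxT_unit h : h \in unitmx -> invmxT h \in unitmx.
Proof.
have -> : invmxT h = (invmx h)^T by apply/matrixP => j k; rewrite !mxE.
by rewrite unitmx_tr unitmx_inv.
Qed.

Lemma ipEl h u v : ip h u v =
  \sum_(I : {set 'I_n}) \sum_(J : {set 'I_n}) u I J *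
    \sum_(K : {set 'I_n}) \sum_(L : {set 'I_n}) (v K L)^* * basis_ip h I J K L.
Proof.
rewrite /ip; apply: eq_bigr => I _; apply: eq_bigr => J _; rewrite big_distrr.
by apply: eq_bigr => K _; rewrite big_distrr; apply: eq_bigr => L _; rewrite -mulrA.
Qed.

Lemma ipEr h u v : ip h u v =
  \sum_(K : {set 'I_n}) \sum_(L : {set 'I_n}) (v K L)^* *
    \sum_(I : {set 'I_n}) \sum_(J : {set 'I_n}) u I J * basis_ip h I J K L.
Proof.
rewrite /ip; under eq_bigr => I _ do rewrite exchange_big /=.
rewrite exchange_big /=; apply: eq_bigr => K _.
under eq_bigr => I _ do rewrite exchange_big /=.
rewrite exchange_big; apply: eq_bigr => L _.
rewrite big_distrr; apply: eq_bigr => I _; rewrite big_distrr; apply: eq_bigr => J _.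
by rewrite /= [RHS]mulrCA mulrA.
Qed.

Lemma ip_pairL h u v : ip h u v = \sum_(J : {set 'I_n}) \sum_(L : {set 'I_n})
  subdet_pair (invmxT h) (u^~ J) (v^~ L) * subdet (invmx h) J L.
Proof.
rewrite /ip exchange_big /=; apply: eq_bigr => J _.
under eq_bigr => I _ do rewrite exchange_big /=.
rewrite exchange_big /=; apply: eq_bigr => L _.
rewrite big_distrl; apply: eq_bigr => I _; rewrite big_distrl; apply: eq_bigr => K _.
by rewrite /basis_ip mulrA.
Qed.

Lemma ip_pairR h u v : ip h u v = \sum_(I : {set 'I_n}) \sum_(K : {set 'I_n})
  subdet_pair (invmx h) (u I) (v K) * subdet (invmxT h) I K.
Proof.
rewrite /ip; apply: eq_bigr => I _; rewrite exchange_big /=; apply: eq_bigr => K _.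
rewrite big_distrl; apply: eq_bigr => J _; rewrite big_distrl; apply: eq_bigr => L _.
by rewrite /basis_ip [subdet _ I K * _]mulrC mulrA.
Qed.

Definition dz_wedge j u : cform R n := fun I J => ext_mul j (u^~ J) I.
Definition dzbar_wedge k u : cform R n := fun I J => (-1) ^+ #|I| * ext_mul k (u I) J.
Definition dz_contract h j v : cform R n := fun K L => contract (invmxT h) j (v^~ L) K.
Definition dzbar_contract h k v : cform R n :=
  fun K L => (-1) ^+ #|K| * contract (invmx h) k (v K) L.

Lemma ip_dz_wedge h j u v : ip h (dz_wedge j u) v = ip h u (dz_contract h j v).
Proof.
rewrite !ip_pairL; apply: eq_bigr => J _; apply: eq_bigr => L _.
by rewrite -subdet_pair_ext_mul.
Qed.

Lemma ip_dzbar_wedge h k u v : ip h (dzbar_wedge k u) v = ip h u (dzbar_contract h k v).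
Proof.
rewrite !ip_pairR; apply: eq_bigr => I _; apply: eq_bigr => K _.
have [eIK|] := eqVneq #|I| #|K|; last by move=> /subdet_card_neq ->; rewrite !mulr0.
rewrite subdet_pair_scalel subdet_pair_scaler subdet_pair_ext_mul.
by rewrite rmorphXn rmorphN1 eIK.
Qed.

Lemma wedge_form11E X u I J :
  wedge (form11 X) u I J = \sum_j \sum_k 'i * X j k * dz_wedge j (dzbar_wedge k u) I J.
Proof.
pose T I1 J1 j k := shsign R I1 (I :\: I1) * shsign R J1 (J :\: J1)
  * (-1) ^+ (#|J1| * #|I :\: I1|) * ('i * X j k) * u (I :\: I1) (J :\: J1).
transitivity (\sum_(I1 : {set 'I_n} | I1 \subset I) \sum_(J1 : {set 'I_n} | J1 \subset J)
  \sum_j \sum_k (if I1 == [set j] then (if J1 == [set k] then T I1 J1 j k else 0) else 0)).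
  apply: eq_bigr => I1 _; apply: eq_bigr => J1 _.
  rewrite /form11 big_distrr big_distrl /=; apply: eq_bigr => j _.
  rewrite big_distrr big_distrl /=; apply: eq_bigr => k _.
  by case: eqP => _; case: eqP => _ /=; rewrite ?mulr0 ?mul0r.
under eq_bigr => I1 _ do rewrite exchange_big /=.
rewrite exchange_big /=; apply: eq_bigr => j _.
under eq_bigr => I1 _ do rewrite exchange_big /=.
rewrite exchange_big /=; apply: eq_bigr => k _.
transitivity (\sum_(I1 : {set 'I_n} | I1 \subset I) if I1 == [set j] then
  \sum_(J1 : {set 'I_n} | J1 \subset J) (if J1 == [set k] then T I1 J1 j k else 0) else 0).
  by apply: eq_bigr => I1 _; case: eqP => // _; rewrite big1.
rewrite !sum_if_eq !finset.sub1set /dz_wedge /dzbar_wedge /ext_mul /T.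
case: (j \in I); case: (k \in J); rewrite ?mulr0 //.
by rewrite !shsign_set1 cards1 mul1n; ring.
Qed.

Lemma ip_suml (T : finType) h (w : T -> cform R n) v :
  ip h (fun I J => \sum_x w x I J) v = \sum_x ip h (w x) v.
Proof.
rewrite ipEl.
under eq_bigr => I _ do under eq_bigr => J _ do rewrite big_distrl.
under eq_bigr => I _ do rewrite exchange_big.
by rewrite exchange_big; apply: eq_bigr => x _; rewrite ipEl.
Qed.

Lemma ip_sumr (T : finType) h u (w : T -> cform R n) :
  ip h u (fun K L => \sum_x w x K L) = \sum_x ip h u (w x).
Proof.
rewrite ipEr.
under eq_bigr => K _ do under eq_bigr => L _ do rewrite rmorph_sum big_distrl.
under eq_bigr => K _ do rewrite exchange_big.
by rewrite exchange_big; apply: eq_bigr => x _; rewrite ipEr.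
Qed.

Lemma ip_scalel h c w v : ip h (fun I J => c * w I J) v = c * ip h w v.
Proof.
rewrite !ipEl big_distrr; apply: eq_bigr => I _; rewrite big_distrr.
by apply: eq_bigr => J _; rewrite /= mulrA.
Qed.

Lemma ip_scaler h c u w : ip h u (fun K L => c * w K L) = c^* * ip h u w.
Proof.
rewrite !ipEr big_distrr; apply: eq_bigr => K _; rewrite big_distrr.
by apply: eq_bigr => L _; rewrite /= rmorphM mulrA.
Qed.

Lemma ip_subr h u v w : ip h u (fun K L => v K L - w K L) = ip h u v - ip h u w.
Proof.
rewrite !ipEr -sumrB; apply: eq_bigr => K _; rewrite -sumrB; apply: eq_bigr => L _.
by rewrite rmorphB mulrBl.
Qed.

Definition form11_adj h X v : cform R n := fun K L =>
  \sum_j \sum_k ('i * X j k)^* * dzbar_contract h k (dz_contract h j v) K L.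

Lemma ip_wedge_form11 h X u v : ip h (wedge (form11 X) u) v = ip h u (form11_adj h X v).
Proof.
have -> : wedge (form11 X) u =
    fun I J => \sum_j \sum_k 'i * X j k * dz_wedge j (dzbar_wedge k u) I J.
  by apply: funext => I; apply: funext => J; rewrite wedge_form11E.
rewrite ip_suml /form11_adj ip_sumr; apply: eq_bigr => j _.
rewrite ip_suml ip_sumr; apply: eq_bigr => k _.
by rewrite ip_scalel ip_scaler conjCK ip_dz_wedge ip_dzbar_wedge.
Qed.

Definition contract2 a b v : cform R n := fun K L =>
  if (a \in K) || (b \in L) then 0
  else (-1) ^+ #|K| * ins_sign R a K * ins_sign R b L * v (a |: K) (b |: L).

Lemma dzbar_contract_dz_contract h j k v K L :
  dzbar_contract h k (dz_contract h j v) K L =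
  \sum_a \sum_b (invmx h a j)^* * (invmx h k b)^* * contract2 a b v K L.
Proof.
rewrite /dzbar_contract /contract big_distrr big_mkcond exchange_big /=.
apply: eq_bigr => b _; case: (boolP (b \in L)) => bL /=.
  by rewrite big1 // => a _; rewrite /contract2 bL orbT mulr0.
rewrite /dz_contract /contract !big_distrr big_mkcond /=; apply: eq_bigr => a _.
rewrite /contract2 (negbTE bL) orbF; case: (a \in K) => /=; first by rewrite mulr0.
by rewrite !mxE; ring.
Qed.

Lemma form11_adjE h X v K L : form11_adj h X v K L =
  \sum_a \sum_b ('i * (invmx h *m X *m invmx h) a b)^* * contract2 a b v K L.
Proof.
pose H := invmx h.
pose F j k a b := ('i * (H a j * X j k * H k b))^* * contract2 a b v K L.
transitivity (\sum_j \sum_k \sum_a \sum_b F j k a b).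
  apply: eq_bigr => j _; apply: eq_bigr => k _.
  rewrite dzbar_contract_dz_contract big_distrr; apply: eq_bigr => a _.
  by rewrite big_distrr; apply: eq_bigr => b _; rewrite /F /= !rmorphM; ring.
transitivity (\sum_a \sum_b \sum_k \sum_j F j k a b); last first.
  apply: eq_bigr => a _; apply: eq_bigr => b _; rewrite !mxE mulr_sumr rmorph_sum big_distrl.
  apply: eq_bigr => k _; rewrite !mxE big_distrl mulr_sumr rmorph_sum big_distrl.
  by apply: eq_bigr => j _.
under eq_bigr => j _ do rewrite exchange_big.
rewrite exchange_big; apply: eq_bigr => a _.
under eq_bigr => k _ do rewrite exchange_big.
by rewrite exchange_big; apply: eq_bigr => b _; rewrite exchange_big.
Qed.

Lemma form11_adj_self h v K L : h \in unitmx ->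
  form11_adj h h v K L = \sum_a \sum_b ('i * invmx h a b)^* * contract2 a b v K L.
Proof. by move=> hu; rewrite form11_adjE mulVmx ?mul1mx. Qed.

Lemma unitmx_conj_sum_eq0 G (z : 'I_n -> R[i]) : G \in unitmx ->
  (forall j, \sum_a (G j a)^* * z a = 0) -> forall a, z a = 0.
Proof.
move=> Gu Gz a; pose c : 'cV[R[i]]_n := \col_a (z a)^*.
have Gc : G *m c = 0.
  apply/colP => j; rewrite !mxE; have /(congr1 (fun x => x^*)) := Gz j.
  rewrite rmorph0 rmorph_sum => Gzj; rewrite -[RHS]Gzj; apply: eq_bigr => b _.
  by rewrite !mxE rmorphM /= conjCK.
have /colP/(_ a) := mulKmx Gu c; rewrite Gc mulmx0 !mxE => /esym/eqP.
by rewrite conjC_eq0 => /eqP.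
Qed.

Lemma contract_eq0 G g K a : G \in unitmx ->
  (forall j, contract G j g K = 0) -> a \notin K -> g (a |: K) = 0.
Proof.
move=> Gu Gg aK.
pose z b := if b \in K then 0 else ins_sign R b K * g (b |: K).
have /(_ a) : forall b, z b = 0.
  apply: (unitmx_conj_sum_eq0 (z := z) Gu) => j.
  rewrite -[RHS](Gg j) /contract [RHS]big_mkcond.
  by apply: eq_bigr => b _; rewrite /z; case: (b \in K); rewrite ?mulr0 // mulrA.
rewrite /z (negbTE aK) => /eqP; rewrite mulf_eq0 (negbTE (ins_sign_neq0 _ _ _)).
by move=> /eqP.
Qed.

Lemma ip_nondeg_set0 h w : (forall u, ip h u w = 0) -> w finset.set0 finset.set0 = 0.
Proof.
move/(_ (fun I J => (I == finset.set0)%:R * (J == finset.set0)%:R)); rewrite ipEl.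
under eq_bigr => I _ do under eq_bigr => J _ do rewrite -mulrA.
under eq_bigr => I _ do rewrite -big_distrr /=.
rewrite !sum_delta.
under eq_bigr => K _ do under eq_bigr => L _ do
  rewrite /basis_ip !subdet_set0 mulrC -mulrA.
under eq_bigr => K _ do rewrite -big_distrr /=.
by rewrite !sum_delta => /eqP; rewrite conjC_eq0 => /eqP.
Qed.

Lemma ip_nondeg h w : h \in unitmx ->
  (forall u, ip h u w = 0) -> forall K L, w K L = 0.
Proof.
move=> hu.
suff nondeg_card d : forall w, (forall u, ip h u w = 0) ->
    forall K L, (#|K| + #|L|)%N = d -> w K L = 0.
  by move=> Hw K L; exact: (nondeg_card _ w Hw K L erefl).
elim: d => [|d IH] {}w Hw K L.
  move=> /eqP; rewrite addn_eq0 !cards_eq0 => /andP[/eqP -> /eqP ->].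
  exact: ip_nondeg_set0.
move=> cardKL; case: (set_0Vmem K) => [K0 | [a aK]]; last first.
  rewrite -(finset.setD1K aK).
  apply: (contract_eq0 (g := w^~ L) (K := K :\ a) (invmxT_unit hu)); last first.
    by rewrite !inE eqxx.
  move=> j; apply: (IH (dz_contract h j w)) => [u|].
    by rewrite -ip_dz_wedge.
  by move: cardKL; rewrite (cardsD1 a K) aK add1n addSn => -[].
have [b bL] : exists b, b \in L.
  by apply/set0Pn; rewrite -finset.card_gt0; move: cardKL; rewrite K0 cards0 add0n => ->.
have hiu : invmx h \in unitmx by rewrite unitmx_inv.
rewrite -(finset.setD1K bL); apply: (contract_eq0 (g := w K) (K := L :\ b) hiu); last first.
  by rewrite !inE eqxx.
move=> k; apply/eqP; rewrite -(mulrI_eq0 _ (@lreg_sign _ #|K|)); apply/eqP.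
apply: (IH (dzbar_contract h k w)) => [u|].
  by rewrite -ip_dzbar_wedge.
by move: cardKL; rewrite (cardsD1 b L) bL add1n addnS => -[].
Qed.

Lemma ip_adjoint_unique h (F A B : cform R n -> cform R n) : h \in unitmx ->
  (forall u v, ip h (F u) v = ip h u (A v)) ->
  (forall u v, ip h (F u) v = ip h u (B v)) ->
  forall v K L, A v K L = B v K L.
Proof.
move=> hu FA FB v K L; apply/eqP; rewrite -subr_eq0; apply/eqP.
apply: (ip_nondeg hu (w := fun K L => A v K L - B v K L)) => u.
by rewrite ip_subr -FA -FB subrr.
Qed.

Lemma posdef_unitmx h : is_posdef h -> h \in unitmx.
Proof.
move=> hpos; rewrite unitmxE unitfE; apply/negP => /det0P [v v0 vh].
have [j vj] : exists j, v 0 j != 0.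
  apply/existsP; apply: contraR v0; rewrite negb_exists => /forallP v0j.
  by apply/eqP/rowP => j; rewrite mxE; move/negPn: (v0j j) => /eqP.
have := hpos (fun j => v 0 j) (ex_intro _ j vj); rewrite exchange_big /=.
rewrite (eq_bigr (fun k => (v *m h) 0 k * (v 0 k)^*)) => [|k _]; last first.
  by rewrite mxE big_distrl; apply: eq_bigr => j' _; rewrite /= [h j' k * _]mulrC.
by rewrite vh big1 ?lt0r ?eqxx // => k _; rewrite mxE mul0r.
Qed.

End InnerProduct.

Section ComplexDerivative.
Variable R : realType.
Local Open Scope complex_scope.
Implicit Types (f g : R -> R[i]) (c d : R[i]).

Lemma cReD (x y : R[i]) : complex.Re (x + y) = complex.Re x + complex.Re y.
Proof. by case: x; case: y. Qed.

Lemma cImD (x y : R[i]) : complex.Im (x + y) = complex.Im x + complex.Im y.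
Proof. by case: x; case: y. Qed.

Lemma cReM (x y : R[i]) :
  complex.Re (x * y) = complex.Re x * complex.Re y - complex.Im x * complex.Im y.
Proof. by case: x; case: y. Qed.

Lemma cImM (x y : R[i]) :
  complex.Im (x * y) = complex.Re x * complex.Im y + complex.Im x * complex.Re y.
Proof. by case: x => a b; case: y => c d /=; ring. Qed.

Lemma cReJ (x : R[i]) : complex.Re (x^*)%R = complex.Re x.
Proof. by case: x. Qed.

Lemma cImJ (x : R[i]) : complex.Im (x^*)%R = - complex.Im x.
Proof. by case: x. Qed.

Lemma cReV (x : R[i]) :
  complex.Re (x^-1)%R = complex.Re x / (complex.Re x ^+ 2 + complex.Im x ^+ 2).
Proof. by case: x. Qed.

Lemma cImV (x : R[i]) :
  complex.Im (x^-1)%R = - (complex.Im x / (complex.Re x ^+ 2 + complex.Im x ^+ 2)).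
Proof. by case: x. Qed.

Lemma is_derive0_ext (u v : R -> R) du :
  u =1 v -> is_derive (0 : R) (1 : R) u du -> is_derive (0 : R) (1 : R) v du.
Proof. by move=> /funext ->. Qed.

Definition is_cderive0 f c :=
  is_derive (0 : R) (1 : R) (fun t => complex.Re (f t)) (complex.Re c) /\
  is_derive (0 : R) (1 : R) (fun t => complex.Im (f t)) (complex.Im c).

Definition cderivable0 f := exists c, is_cderive0 f c.

Lemma is_cderive0_eq f c d : is_cderive0 f c -> c = d -> is_cderive0 f d.
Proof. by move=> ? <-. Qed.

Lemma is_cderive0_ext f g c : f =1 g -> is_cderive0 f c -> is_cderive0 g c.
Proof. by move=> /funext ->. Qed.

Lemma is_cderive0_near (e : R) f g c : 0 < e ->
  (forall t, - e < t < e -> f t = g t) -> is_cderive0 f c -> is_cderive0 g c.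
Proof.
move=> e0 fg [fRe fIm].
have fg_near : \forall t \near 0, f t = g t.
  apply/nbhs_ballP; exists e => // t /=; rewrite /ball /= sub0r normrN => te.
  by apply: fg; rewrite -ltr_norml.
split; apply: near_eq_is_derive (_ : is_derive _ _ _ _) => //.
- by near=> t; rewrite (near fg_near t).
- by near=> t; rewrite (near fg_near t).
Unshelve. all: by end_near.
Qed.

Lemma is_cderive0_unique f c d : is_cderive0 f c -> is_cderive0 f d -> c = d.
Proof.
move=> [fRe fIm] [gRe gIm]; apply/eqP; rewrite eq_complex; apply/andP; split; apply/eqP.
  by rewrite -(@derive_val _ _ _ _ _ _ _ fRe) -(@derive_val _ _ _ _ _ _ _ gRe).
by rewrite -(@derive_val _ _ _ _ _ _ _ fIm) -(@derive_val _ _ _ _ _ _ _ gIm).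
Qed.

Lemma is_cderive0_cst c : is_cderive0 (fun _ => c) 0.
Proof. by split; apply: is_derive_cst. Qed.

Lemma is_cderive0_id : is_cderive0 (fun t => t%:C) 1.
Proof. by split => /=; [apply: is_derive_id | apply: is_derive_cst]. Qed.

Lemma is_cderive0D f g c d :
  is_cderive0 f c -> is_cderive0 g d -> is_cderive0 (fun t => f t + g t) (c + d).
Proof.
move=> [fRe fIm] [gRe gIm]; split.
  by rewrite cReD; under eq_fun do rewrite cReD; exact: is_deriveD.
by rewrite cImD; under eq_fun do rewrite cImD; exact: is_deriveD.
Qed.

Lemma is_cderive0M f g c d : is_cderive0 f c -> is_cderive0 g d ->
  is_cderive0 (fun t => f t * g t) (f 0 * d + c * g 0).
Proof.
move=> [fRe fIm] [gRe gIm]; split.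
  apply: (is_derive_eq (is_derive0_ext _ (is_deriveB (is_deriveM fRe gRe) (is_deriveM fIm gIm)))).
  - by move=> t /=; rewrite cReM.
  - by rewrite cReD !cReM /GRing.scale /=; ring.
apply: (is_derive_eq (is_derive0_ext _ (is_deriveD (is_deriveM fRe gIm) (is_deriveM fIm gRe)))).
- by move=> t /=; rewrite cImM.
- by rewrite cImD !cImM /GRing.scale /=; ring.
Qed.

Lemma is_cderive0J f c : is_cderive0 f c -> is_cderive0 (fun t => (f t)^*%R) c^*%R.
Proof.
move=> [fRe fIm]; split; first by rewrite cReJ; under eq_fun do rewrite cReJ.
by rewrite cImJ; under eq_fun do rewrite cImJ; exact: is_deriveN.
Qed.

Lemma is_cderive0_sum (T : Type) (r : seq T) (P : pred T) (F : T -> R -> R[i]) (c : T -> R[i]) :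
  (forall x, P x -> is_cderive0 (F x) (c x)) ->
  is_cderive0 (fun t => \sum_(x <- r | P x) F x t) (\sum_(x <- r | P x) c x).
Proof.
move=> Fc; elim: r => [|x r IH].
  by rewrite big_nil; apply: is_cderive0_ext (is_cderive0_cst 0) => t; rewrite big_nil.
rewrite big_cons; case: (boolP (P x)) => Px.
  by apply: is_cderive0_ext (is_cderive0D (Fc x Px) IH) => t; rewrite big_cons Px.
by apply: is_cderive0_ext IH => t; rewrite big_cons (negbTE Px).
Qed.

Lemma cderivable0_big (op : R[i] -> R[i] -> R[i]) (idx : R[i]) (T : Type) (r : seq T)
    (P : pred T) (F : T -> R -> R[i]) :
  (forall f g, cderivable0 f -> cderivable0 g -> cderivable0 (fun t => op (f t) (g t))) ->
  (forall x, P x -> cderivable0 (F x)) ->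
  cderivable0 (fun t => \big[op/idx]_(x <- r | P x) F x t).
Proof.
move=> opD FD; elim: r => [|x r [c IH]].
  by exists 0; apply: is_cderive0_ext (is_cderive0_cst idx) => t; rewrite big_nil.
case: (boolP (P x)) => Px.
  have [d Hd] := opD _ _ (FD x Px) (ex_intro _ c IH).
  by exists d; apply: is_cderive0_ext Hd => t; rewrite big_cons Px.
by exists c; apply: is_cderive0_ext IH => t; rewrite big_cons (negbTE Px).
Qed.

Lemma cderivable0D f g : cderivable0 f -> cderivable0 g -> cderivable0 (fun t => f t + g t).
Proof. by move=> [c fc] [d gd]; exists (c + d); exact: is_cderive0D. Qed.

Lemma cderivable0M f g : cderivable0 f -> cderivable0 g -> cderivable0 (fun t => f t * g t).
Proof. by move=> [c fc] [d gd]; eexists; exact: is_cderive0M fc gd. Qed.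

Lemma cderivable0_det m (M : R -> 'M[R[i]]_m) :
  (forall i j, cderivable0 (fun t => M t i j)) -> cderivable0 (fun t => \det (M t)).
Proof.
move=> MD; rewrite /cderivable0; under eq_fun do rewrite /determinant.
apply: cderivable0_big => [|s _]; first exact: cderivable0D.
apply: cderivable0M; first by exists 0; exact: is_cderive0_cst.
by apply: cderivable0_big => [|k _]; [exact: cderivable0M | exact: MD].
Qed.

Lemma cderivable0V f : cderivable0 f -> f 0 != 0 -> cderivable0 (fun t => (f t)^-1%R).
Proof.
move=> [c [fRe fIm]] f0.
pose r t := complex.Re (f t) ^+ 2 + complex.Im (f t) ^+ 2.
have rD : derivable r 0 1.
  exact: (@ex_derive _ _ _ _ _ _ _ (is_deriveD (is_deriveX 2 fRe) (is_deriveX 2 fIm))).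
have r0 : r 0 != 0.
  rewrite /r; move: f0; case: (f 0) => a b /= ab.
  rewrite paddr_eq0 ?sqr_ge0 // !sqrf_eq0; apply: contra ab => /andP[/eqP -> /eqP ->].
  by [].
have /derivableP rV := derivableV r0 rD.
apply: (ex_intro _ (_ +i* _)); split => /=.
  by apply: is_derive0_ext (is_deriveM fRe rV) => t /=; rewrite cReV.
by apply: is_derive0_ext (is_deriveN (is_deriveM fIm rV)) => t /=; rewrite cImV.
Qed.

Lemma is_cderive0_entry n (h g : 'M[R[i]]_n) x y :
  is_cderive0 (fun t => (h + t%:C *: g) x y) (g x y).
Proof.
apply: is_cderive0_ext (is_cderive0_eq (is_cderive0D (is_cderive0_cst (h x y))
   (is_cderive0M is_cderive0_id (is_cderive0_cst (g x y)))) _) => [t|].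
  by rewrite !mxE.
by rewrite add0r mulr0 add0r mul1r.
Qed.

Section MatrixFamily.
Variables (n : nat) (h g : 'M[R[i]]_n) (e : R).
Hypotheses (e_gt0 : 0 < e) (unit_near0 : forall t, - e < t < e -> h + t%:C *: g \in unitmx).

Local Notation M t := (h + t%:C *: g).

Lemma cderivable0_invmx a b : cderivable0 (fun t => invmx (M t) a b).
Proof.
have [c1 detD] : cderivable0 (fun t => \det (M t)).
  by apply: cderivable0_det => i j; exists (g i j); exact: is_cderive0_entry.
have [c2 minorD] : cderivable0 (fun t => \det (row' b (col' a (M t)))).
  apply: cderivable0_det => i j; exists (g (lift b i) (lift a j)).
  by apply: is_cderive0_ext (is_cderive0_entry h g _ _) => t; rewrite !mxE.
have detM0 : \det (M 0) != 0.
  by rewrite -unitfE -unitmxE unit_near0 // oppr_lt0 e_gt0.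
have [c3 invdetD] := cderivable0V (ex_intro _ c1 detD) detM0.
eexists; apply: (is_cderive0_near e_gt0) (is_cderive0M invdetD
  (is_cderive0M (is_cderive0_cst ((-1) ^+ (b + a))) minorD)) => t te.
by rewrite /invmx unit_near0 // !mxE.
Qed.

Lemma is_cderive0_invmx a b :
  is_cderive0 (fun t => invmx (M t) a b) (- (invmx h *m g *m invmx h) a b).
Proof.
have [D MD] : exists (D : 'M[R[i]]_n),
    forall a b, is_cderive0 (fun t => invmx (M t) a b) (D a b).
  have /boolp.choice [D' D'P] : forall ab : 'I_n * 'I_n,
      cderivable0 (fun t => invmx (M t) ab.1 ab.2).
    by move=> [a' b']; exact: cderivable0_invmx.
  by exists (\matrix_(i, j) D' (i, j)) => i j; rewrite mxE; exact: D'P (i, j).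
have h0 : M 0 = h by rewrite scale0r addr0.
have hu : h \in unitmx by rewrite -h0 unit_near0 // oppr_lt0 e_gt0.
(* Differentiate [invmx (M t) *m M t = 1] at [t = 0]. *)
have DhE : D *m h = - (invmx h *m g).
  apply/eqP; rewrite -addr_eq0; apply/eqP/matrixP => a' b'; rewrite !mxE -big_split /=.
  apply: (@is_cderive0_unique (fun t => \sum_k invmx (M t) a' k * M t k b')).
    apply: is_cderive0_eq (is_cderive0_sum _ (fun k _ =>
      is_cderive0M (MD a' k) (is_cderive0_entry h g k b'))) _.
    by apply: eq_bigr => k _; rewrite h0 addrC.
  apply: (is_cderive0_near e_gt0) (is_cderive0_cst ((1%:M : 'M[R[i]]_n) a' b')) => t te.
  by rewrite -(mulVmx (unit_near0 te)) mxE.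
have DE : D = - (invmx h *m g *m invmx h).
  by rewrite -mulNmx -DhE -mulmxA mulmxV ?mulmx1.
by have := MD a b; rewrite DE mxE.
Qed.

End MatrixFamily.

End ComplexDerivative.

Section FormFamilies.
Variables (R : realType) (n : nat).
Local Open Scope complex_scope.
Implicit Types (a : R -> cform R n) (da : cform R n) (I J K L : {set 'I_n}).

Lemma is_cderive0_dform0 a I J :
  derivable (fun t => complex.Re (a t I J)) 0 1 ->
  derivable (fun t => complex.Im (a t I J)) 0 1 ->
  is_cderive0 (fun t => a t I J) (dform0 a I J).
Proof.
move=> /derivableP aRe /derivableP aIm; split.
  apply: is_derive_eq aRe _.
  by rewrite /dform0 cReD cReM /= derive1E mul0r mulr0 subr0 addr0.
apply: is_derive_eq aIm _.
by rewrite /dform0 cImD cImM /= derive1E mul0r mul1r !add0r.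
Qed.

Lemma is_cderive0_contract2 a da x y K L :
  (forall I J, is_cderive0 (fun t => a t I J) (da I J)) ->
  is_cderive0 (fun t => contract2 x y (a t) K L) (contract2 x y da K L).
Proof.
rewrite /contract2 => aD; case: ifP => _; first exact: is_cderive0_cst.
apply: is_cderive0_eq (is_cderive0M (is_cderive0_cst _) (aD _ _)) _.
by rewrite mul0r addr0.
Qed.

Lemma is_cderive0_form11_adj (h g : 'M[R[i]]_n) (e : R) a da K L : 0 < e ->
  (forall t, - e < t < e -> h + t%:C *: g \in unitmx) ->
  (forall I J, is_cderive0 (fun t => a t I J) (da I J)) ->
  is_cderive0 (fun t => form11_adj (h + t%:C *: g) (h + t%:C *: g) (a t) K L)
              (form11_adj h h da K L - form11_adj h g (a 0) K L).
Proof.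
move=> e_gt0 unit_near0 aD.
have h0 : h + 0%:C *: g = h by rewrite scale0r addr0.
have hu : h \in unitmx by rewrite -h0 unit_near0 // oppr_lt0 e_gt0.
apply: (is_cderive0_near e_gt0 (f := fun t => \sum_x \sum_y
    ('i * invmx (h + t%:C *: g) x y)^*%R * contract2 x y (a t) K L)).
  by move=> t te; rewrite form11_adj_self ?unit_near0.
rewrite form11_adj_self // form11_adjE -sumrB.
apply: is_cderive0_sum => x _; rewrite -sumrB; apply: is_cderive0_sum => y _.
apply: is_cderive0_eq (is_cderive0M (is_cderive0J (is_cderive0M (is_cderive0_cst 'i)
  (is_cderive0_invmx e_gt0 unit_near0 x y))) (is_cderive0_contract2 x y K L aD)) _.
by rewrite h0 mul0r addr0 mulrN rmorphN mulNr addrC.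
Qed.

End FormFamilies.

Unset Implicit Arguments.

Theorem lemma3p5 (R : realType) (n p q : nat) (h g : 'M[complex R]_n) (eps : R)
    (a : R -> cform R n) (Lam : R -> cform R n -> cform R n)
    (Gstar : cform R n -> cform R n) :
  (* omega = form11 h is a Hermitian metric, gamma = form11 g a real (1,1)-cform *)
  is_hermitian h -> is_posdef h -> is_hermitian g ->
  0 < eps ->
  (forall t, - eps < t < eps -> is_posdef (h + (t%:C)%C *: g)) ->
  (* (a t) is a C^infinity family of (p,q)-forms *)
  (forall t, - eps < t < eps -> is_pq_form p q (a t)) ->
  (forall I J, smooth_on eps (fun t => complex.Re (a t I J))
            /\ smooth_on eps (fun t => complex.Im (a t I J))) ->
  (* Lam t = Lambda_{omega + t gamma}, the adjoint of (omega + t gamma) /\ .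
     w.r.t. the inner product induced by omega + t gamma *)
  (forall t, - eps < t < eps -> forall u v : cform R n,
     ip (h + (t%:C)%C *: g) (wedge (form11 (h + (t%:C)%C *: g)) u) v
     = ip (h + (t%:C)%C *: g) u (Lam t v)) ->
  (* Gstar = (gamma /\ .)^*_omega *)
  (forall u v : cform R n, ip h (wedge (form11 g) u) v = ip h u (Gstar v)) ->
  forall I J : {set 'I_n},
    is_derive (0 : R) (1 : R) (fun t => complex.Re (Lam t (a t) I J))
      (complex.Re (Lam 0 (dform0 a) I J - Gstar (a 0) I J))
    /\ is_derive (0 : R) (1 : R) (fun t => complex.Im (Lam t (a t) I J))
      (complex.Im (Lam 0 (dform0 a) I J - Gstar (a 0) I J)).
Proof.
move=> _ h_pos _ eps_gt0 ht_pos _ a_smooth Lam_adj Gstar_adj I J.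
have hu := posdef_unitmx h_pos.
have htu t : - eps < t < eps -> h + (t%:C)%C *: g \in unitmx.
  by move=> te; exact/posdef_unitmx/ht_pos.
have eps0 : - eps < 0 < eps by rewrite oppr_lt0 eps_gt0.
have LamE t v K L : - eps < t < eps ->
    Lam t v K L = form11_adj (h + (t%:C)%C *: g) (h + (t%:C)%C *: g) v K L.
  move=> te.
  exact: ip_adjoint_unique (htu t te) (Lam_adj t te) (ip_wedge_form11 _ _) v K L.
have GstarE v K L : Gstar v K L = form11_adj h g v K L.
  exact: ip_adjoint_unique hu Gstar_adj (ip_wedge_form11 _ _) v K L.
have aD X Y : is_cderive0 (fun t => a t X Y) (dform0 a X Y).
  have [aRe aIm] := a_smooth X Y.
  exact: is_cderive0_dform0 (aRe 0%N 0 eps0) (aIm 0%N 0 eps0).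
have Lam0 v K L : Lam 0 v K L = form11_adj h h v K L by rewrite LamE // scale0r addr0.
have := is_cderive0_form11_adj I J eps_gt0 htu aD.
rewrite -GstarE -Lam0 => adjD; apply: (is_cderive0_near eps_gt0 _ adjD) => t te.
by rewrite LamE.
Qed.
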